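(* Let $S=\{\rho_1=0<\rho_2<\cdots\}$ be an Arf numerical semigroup with conductor $c=\rho_r$. If $j$ is a positive integer with $j<c+r$, then $\beta(\rho_j)\le r-1$ and $\#A[\rho_j]\le 2r-2<\#A[\rho_{c+r}]$.
   Context: A numerical semigroup is a submonoid $S$ of $(\mathbb{N}_0,+)$ with finite complement, with elements listed increasingly. $S$ is Arf if $\rho_i+\rho_j-\rho_k\in S$ for all positive integers $i\ge j\ge k$. The conductor $c$ is the smallest integer such that all integers $\ge c$ lie in $S$, with $c=\rho_r$. For $\rho\in S$: $A[\rho]=\{p\in S:\ \rho-p\in S\}$ and $\beta(\rho)=\max\{j\ge1:\ \rho_1,\dots,\rho_j\in A[\rho]\ \text{and}\ 2\rho_j\le\rho\}$. *)

From mathcomp Require Import all_boot.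
Set Implicit Arguments. Unset Strict Implicit. Unset Printing Implicit Defensive.

Definition numerical_semigroup (S : pred nat) : Prop :=
  [/\ S 0, (forall a b, S a -> S b -> S (a + b)) &
      exists N, forall n, N <= n -> S n].

(* rho is the increasing enumeration rho_1 < rho_2 < ... of S
   (indices are positive integers; rho 0 is irrelevant). *)
Definition enumerates (S : pred nat) (rho : nat -> nat) : Prop :=
  (forall i j, 0 < i -> i < j -> rho i < rho j) /\
  (forall x, S x <-> exists2 i, 0 < i & rho i = x).

Definition Arf (S : pred nat) (rho : nat -> nat) : Prop :=
  forall i j k, 0 < k -> k <= j -> j <= i -> S (rho i + rho j - rho k).

Definition is_conductor (S : pred nat) (c : nat) : Prop :=
  (forall n, c <= n -> S n) /\
  (forall m, (forall n, m <= n -> S n) -> c <= m).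

(* membership in A[x] = { p in S : x - p in S } (p <= x is implicit). *)
Definition inA (S : pred nat) (x p : nat) : bool := [&& S p, p <= x & S (x - p)].

(* A[x] as a duplicate-free list; its cardinality is size (Aset S x). *)
Definition Aset (S : pred nat) (x : nat) : seq nat :=
  [seq p <- iota 0 x.+1 | inA S x p].

Definition beta_cond (S : pred nat) (rho : nat -> nat) (x j : nat) : bool :=
  all (fun i => inA S x (rho i)) (iota 1 j) && (2 * rho j <= x).

(* beta(x) = max{ j >= 1 : beta_cond j }; any such j satisfies j <= x + 1
   since the rho_i are distinct naturals, so the range 1 <= j < x+2 suffices. *)
Definition beta (S : pred nat) (rho : nat -> nat) (x : nat) : nat :=
  \max_(1 <= j < x.+2 | beta_cond S rho x j) j.

From mathcomp Require Import all_boot.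
From mathcomp Require Import zify.

Set Implicit Arguments.
Unset Strict Implicit.
Unset Printing Implicit Defensive.

(* If j < c + r then x = rho_j < rho_(c+r) = 2c, so for every p in A[x] one of
   p and x - p is an element of S below c.  There are exactly r - 1 such
   elements, rho_1, ..., rho_(r-1); this gives #A[x] <= 2(r - 1), and
   2 rho_i <= x < 2c forces i < r, so beta(x) <= r - 1.  On the other hand
   A[2c] contains these r - 1 elements, their complements 2c - p, and c. *)

Definition small_elts (S : pred nat) (c : nat) : seq nat := [seq p <- iota 0 c | S p].

Lemma mem_small_elts S c p : (p \in small_elts S c) = (p < c) && S p.
Proof. by rewrite mem_filter mem_iota andbC. Qed.

Lemma small_elts_uniq S c : uniq (small_elts S c).
Proof. by rewrite filter_uniq ?iota_uniq. Qed.

Lemma Aset_uniq S x : uniq (Aset S x).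
Proof. by rewrite filter_uniq ?iota_uniq. Qed.

Lemma mem_Aset S x p : (p \in Aset S x) = [&& S p, p <= x & S (x - p)].
Proof. by rewrite mem_filter mem_iota /inA add0n ltnS /=; case: (p <= x); rewrite ?andbT ?andbF. Qed.

Lemma size_Aset_leq S c x : x < 2 * c -> size (Aset S x) <= 2 * size (small_elts S c).
Proof.
move=> ltx; have uA := Aset_uniq S x.
rewrite -(count_predC (fun p => p < c)) -!size_filter mul2n -addnn.
apply: leq_add.
  apply: uniq_leq_size (filter_uniq _ uA) _ => p.
  by rewrite mem_filter mem_Aset mem_small_elts => /andP[-> /and3P[-> _ _]].
rewrite -(size_map (fun p => x - p)); apply: uniq_leq_size.
  rewrite map_inj_in_uniq; first exact: filter_uniq.
  move=> p q; rewrite mem_filter mem_Aset => /and4P[_ _ px _].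
  by rewrite mem_filter mem_Aset => /and4P[_ _ qx _]; lia.
move=> _ /mapP[p + ->]; rewrite mem_filter mem_Aset mem_small_elts /= -leqNgt.
by case/and4P=> cp _ px ->; rewrite andbT; lia.
Qed.

Lemma size_Aset_double (S : pred nat) c : (forall n, c <= n -> S n) ->
  (2 * size (small_elts S c)).+1 <= size (Aset S (2 * c)).
Proof.
move=> Sc; set L := small_elts S c.
set T := L ++ c :: [seq 2 * c - p | p <- L].
have uT : uniq T.
  rewrite cat_uniq cons_uniq small_elts_uniq /= negb_or.
  rewrite map_inj_in_uniq ?small_elts_uniq; last first.
    by move=> p q; rewrite !mem_small_elts => /andP[pc _] /andP[qc _]; lia.
  rewrite mem_small_elts ltnn /= andbT; apply/andP; split.
    by apply/hasPn=> _ /mapP[p + ->]; rewrite /= !mem_small_elts => /andP[pc _]; lia.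
  by apply/mapP=> -[p]; rewrite mem_small_elts => /andP[pc _]; lia.
have -> : (2 * size L).+1 = size T by rewrite size_cat /= size_map; lia.
apply: uniq_leq_size => // q; rewrite mem_Aset mem_cat inE.
case/or3P=> [|/eqP->|/mapP[p]].
- by rewrite mem_small_elts => /andP[qc ->]; rewrite Sc; lia.
- by rewrite !Sc //; lia.
- rewrite mem_small_elts => /andP[pc Sp] ->.
  by rewrite subKn ?Sp ?leq_subr ?Sc //; lia.
Qed.

Section Enumeration.
Variables (S : pred nat) (rho : nat -> nat) (c r : nat).
Hypothesis rho_incr : forall i j, 0 < i -> i < j -> rho i < rho j.
Hypothesis rho_onto : forall x, S x <-> exists2 i, 0 < i & rho i = x.
Hypothesis S_conductor : forall n, c <= n -> S n.
Hypotheses (r_gt0 : 0 < r) (rho_r : rho r = c).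

Lemma rho_ltn i k : 0 < i -> 0 < k -> (rho i < rho k) = (i < k).
Proof.
move=> i0 k0; case: (ltngtP i k) => [ik|ki|->]; first exact: rho_incr.
  by apply/negbTE; rewrite -leqNgt ltnW // rho_incr.
by rewrite ltnn.
Qed.

Lemma rho_conductor_add k : rho (r + k) = c + k.
Proof.
elim: k => [|k IH]; first by rewrite !addn0.
have [i i0 rho_i] := (rho_onto (c + k.+1)).1 (S_conductor (leq_addr _ _)).
have lt_rk : rho (r + k) < rho (r + k.+1) by apply: rho_incr; lia.
have lt_ri : r + k < i by rewrite -(@rho_ltn (r + k) i) ?rho_i ?IH; lia.
have le_i : rho (r + k.+1) <= rho i by rewrite leqNgt rho_ltn; lia.
by apply/eqP; rewrite eqn_leq -{1}rho_i le_i addnS -IH.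
Qed.

Lemma rho_inj i k : 0 < i -> 0 < k -> rho i = rho k -> i = k.
Proof.
move=> i0 k0 e; apply/eqP.
by rewrite eqn_leq leqNgt [k <= i]leqNgt -(rho_ltn i0 k0) -(rho_ltn k0 i0) e ltnn.
Qed.

Lemma size_small_elts : size (small_elts S c) = r - 1.
Proof.
suff /perm_size-> : perm_eq (small_elts S c) (map rho (iota 1 (r - 1))).
  by rewrite size_map size_iota.
apply: uniq_perm; first exact: small_elts_uniq.
  rewrite map_inj_in_uniq ?iota_uniq // => a b.
  by rewrite !mem_iota => /andP[a0 _] /andP[b0 _]; apply: rho_inj.
move=> p; rewrite mem_small_elts; apply/andP/mapP => [[pc /rho_onto[i i0 rho_i]]|[i]].
  move: pc; rewrite -rho_i -rho_r rho_ltn // => ir.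
  by exists i; rewrite // mem_iota; lia.
rewrite mem_iota => /andP[i0 ir] ->; split; last by apply/rho_onto; exists i.
by rewrite -rho_r rho_ltn //; lia.
Qed.

Lemma beta_leq x : x < 2 * c -> beta S rho x <= r - 1.
Proof.
move=> ltx; apply: (big_ind (fun v => v <= r - 1)) => // [a b|j /andP[_ le_2rho]].
  by rewrite geq_max => -> ->.
case: j le_2rho => // j le_2rho.
have : rho j.+1 < rho r by lia.
by rewrite rho_ltn //; lia.
Qed.

End Enumeration.

Theorem mainTheorem8 (S : pred nat) (rho : nat -> nat) (c r : nat)
  (hS : numerical_semigroup S) (hrho : enumerates S rho) (hArf : Arf S rho)
  (hc : is_conductor S c) (hr0 : 0 < r) (hr : rho r = c)
  (j : nat) (hj0 : 0 < j) (hj : j < c + r) :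
  beta S rho (rho j) <= r - 1 /\
  size (Aset S (rho j)) <= 2 * r - 2 /\
  2 * r - 2 < size (Aset S (rho (c + r))).
Proof.
case: hrho => rho_incr rho_onto; case: hc => S_conductor _.
have rho_cr : rho (c + r) = 2 * c.
  by rewrite addnC (rho_conductor_add rho_incr rho_onto S_conductor hr0 hr); lia.
have rho_j : rho j < 2 * c by rewrite -rho_cr rho_incr.
have size_L := size_small_elts rho_incr rho_onto hr0 hr.
split; first exact: beta_leq rho_incr hr0 hr _ rho_j.
split; first by have := size_Aset_leq S rho_j; lia.
by rewrite rho_cr; have := size_Aset_double S_conductor; lia.
Qed.
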